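(* Let $R$ be a complete discrete valuation ring of equal characteristic with maximal ideal $\mathfrak{p}$ and finite residue field $k=R/\mathfrak{p}$ with $|k|>9$, and let $n\ge2$. Then every closed normal subgroup $H$ of $\mathrm{SL}_n(R)$ whose image in $\mathrm{SL}_n(k)$ is all of $\mathrm{SL}_n(k)$ is equal to $\mathrm{SL}_n(R)$.
   Context: The topology on $\mathrm{SL}_n(R)$ is the one induced by $R$. *)

From HB Require Import structures.
From mathcomp Require Import all_boot all_order all_algebra.
Set Implicit Arguments. Unset Strict Implicit. Unset Printing Implicit Defensive.
Import GRing.Theory.
Local Open Scope ring_scope.

Definition pdvd (R : comNzRingType) (pi : R) (m : nat) (x : R) : Prop :=
  exists c : R, x = pi ^+ m * c.

Definition DVR_uniformizer (R : idomainType) (pi : R) : Prop :=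
  [/\ pi != 0, pi \isn't a GRing.unit &
      forall x : R, x != 0 -> exists (m : nat) (u : R), u \is a GRing.unit /\ x = u * pi ^+ m].

Definition padic_complete (R : idomainType) (pi : R) : Prop :=
  forall a : nat -> R,
    (forall m, exists N, forall i j, (N <= i)%N -> (N <= j)%N -> pdvd pi m (a i - a j)) ->
    exists l : R, forall m, exists N, forall i, (N <= i)%N -> pdvd pi m (a i - l).

Definition SLmx (R : comUnitRingType) (n : nat) : pred 'M[R]_n :=
  fun A => \det A == 1.

Definition normal_subgroup_SL (R : comUnitRingType) (n : nat) (H : 'M[R]_n -> Prop) : Prop :=
  [/\ (forall A, H A -> SLmx A),
      H 1%:M,
      (forall A B, H A -> H B -> H (A *m B)),
      (forall A, H A -> H (invmx A)) &
      (forall g A, SLmx g -> H A -> H (g *m A *m invmx g))].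

(* H is closed in SL_n(R) for the topology induced by the pi-adic topology of R:
   every A in SL_n(R) all of whose basic neighbourhoods
   {B | B = A entrywise mod p^m} meet H lies in H. *)
Definition SL_closed (R : comUnitRingType) (pi : R) (n : nat) (H : 'M[R]_n -> Prop) : Prop :=
  forall A : 'M[R]_n, SLmx A ->
    (forall m : nat, exists B, H B /\ forall i j, pdvd pi m (B i j - A i j)) ->
    H A.

From HB Require Import structures.
From mathcomp Require Import all_boot all_order all_algebra all_field.
From mathcomp Require Import ring.
Set Implicit Arguments. Unset Strict Implicit. Unset Printing Implicit Defensive.
Import GRing.Theory.
Local Open Scope ring_scope.

(* Since H is closed, it suffices to show that H is dense:
   every A in SL_n(R) is congruent mod pi^M to an element of H, for all M.
   For M = 1 this is the surjectivity of H onto SL_n(k); we go from M to M+1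
   (M >= 1) by studying the set L_M of matrices Y such that some h in H
   satisfies h = 1 + pi^M Y mod pi^(M+1).  To first order, products, inverses
   and conjugates of such h act linearly on Y, so L_M is an additive group that
   only depends on Y mod pi, and commutators of elements of H with 1 + pi^M Y
   show that g Y g^-1 - Y lies in L_M for every g in SL_n(R).  Conjugating by
   diagonal matrices diag(mu, mu^-1) (mu and mu^2 - 1 units, which exist as
   |k| > 3) and by transvections yields every traceless matrix; finally, for
   X = 1 + pi^M Y in SL_n(R) the determinant forces pi | tr Y, hence Y lies in
   L_M and X is approximated by H mod pi^(M+1). *)

Section PowerIdeal.
Variables (R : comNzRingType) (pi : R).

Lemma pdvd0 m : pdvd pi m 0.
Proof. by exists 0; rewrite mulr0. Qed.

Lemma pdvd_any (x : R) : pdvd pi 0 x.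
Proof. by exists x; rewrite mul1r. Qed.

Lemma pdvdD m x y : pdvd pi m x -> pdvd pi m y -> pdvd pi m (x + y).
Proof. by move=> [a ->] [b ->]; exists (a + b); rewrite mulrDr. Qed.

Lemma pdvdN m x : pdvd pi m x -> pdvd pi m (- x).
Proof. by move=> [a ->]; exists (- a); rewrite mulrN. Qed.

Lemma pdvdMM a b x y : pdvd pi a x -> pdvd pi b y -> pdvd pi (a + b) (x * y).
Proof. by move=> [c ->] [d ->]; exists (c * d); rewrite exprD; ring. Qed.

Lemma pdvdMr m x y : pdvd pi m x -> pdvd pi m (x * y).
Proof. by move=> hx; rewrite -[m]addn0; apply: pdvdMM hx (pdvd_any y). Qed.

Lemma pdvdMl m x y : pdvd pi m x -> pdvd pi m (y * x).
Proof. by rewrite mulrC; apply: pdvdMr. Qed.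

Lemma pdvdW m m' x : (m' <= m)%N -> pdvd pi m x -> pdvd pi m' x.
Proof.
by move=> le_m'm [a ->]; exists (pi ^+ (m - m') * a); rewrite mulrA -exprD subnKC.
Qed.

Lemma pdvd_cancel M m x : GRing.lreg pi -> pdvd pi (M + m) (pi ^+ M * x) -> pdvd pi m x.
Proof. by move=> reg_pi [c]; rewrite exprD -mulrA => /(lregX reg_pi) ->; exists c. Qed.

(* Matrices all of whose entries lie in p^m, i.e. matrices that vanish mod pi^m;
   "A = B mod pi^m" is expressed as [mxdvd m (A - B)]. *)
Definition mxdvd n m (A : 'M[R]_n) : Prop := forall i j, pdvd pi m (A i j).

Variable n : nat.
Implicit Types A B : 'M[R]_n.

Lemma mxdvd0 m : mxdvd m (0 : 'M[R]_n).
Proof. by move=> i j; rewrite mxE; apply: pdvd0. Qed.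

Lemma mxdvd_refl m A : mxdvd m (A - A).
Proof. by rewrite subrr; apply: mxdvd0. Qed.

Lemma mxdvdD m A B : mxdvd m A -> mxdvd m B -> mxdvd m (A + B).
Proof. by move=> hA hB i j; rewrite mxE; apply: pdvdD. Qed.

Lemma mxdvdN m A : mxdvd m A -> mxdvd m (- A).
Proof. by move=> hA i j; rewrite mxE; apply: pdvdN. Qed.

Lemma mxdvdB m A B : mxdvd m A -> mxdvd m B -> mxdvd m (A - B).
Proof. by move=> hA hB; apply: mxdvdD hA (mxdvdN hB). Qed.

Lemma mxdvd_sym m A B : mxdvd m (A - B) -> mxdvd m (B - A).
Proof. by move/mxdvdN; rewrite opprB. Qed.

Lemma mxdvdW m m' A : (m' <= m)%N -> mxdvd m A -> mxdvd m' A.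
Proof. by move=> le_m'm hA i j; apply: pdvdW (hA i j). Qed.

Lemma mxdvdMM a b A B : mxdvd a A -> mxdvd b B -> mxdvd (a + b) (A *m B).
Proof.
move=> hA hB i j; rewrite mxE.
apply: (big_ind (pdvd pi (a + b))) => [|x y|k _]; [exact: pdvd0|exact: pdvdD|exact: pdvdMM].
Qed.

Lemma mxdvdMl m A B : mxdvd m A -> mxdvd m (B *m A).
Proof. by move=> hA; rewrite -[m]add0n; apply: (mxdvdMM _ hA) => i j; apply: pdvd_any. Qed.

Lemma mxdvdMr m A B : mxdvd m A -> mxdvd m (A *m B).
Proof. by move=> hA; rewrite -[m]addn0; apply: (mxdvdMM hA) => i j; apply: pdvd_any. Qed.

Lemma mxdvd_pow M A : mxdvd M (pi ^+ M *: A).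
Proof. by move=> i j; rewrite mxE; exists (A i j). Qed.

Lemma mxdvd_scale M m A : mxdvd m A -> mxdvd (M + m) (pi ^+ M *: A).
Proof. by move=> hA i j; rewrite mxE; apply: pdvdMM (hA i j); exists 1; rewrite mulr1. Qed.

Lemma mxdvd_factor m A : mxdvd m A -> exists Y, A = pi ^+ m *: Y.
Proof.
move=> hA; have ex i j : exists c, A i j == pi ^+ m * c by have [c ->] := hA i j; exists c.
exists (\matrix_(i, j) xchoose (ex i j)).
by apply/matrixP => i j; rewrite !mxE; apply/eqP; apply: (xchooseP (ex i j)).
Qed.

Lemma mxdvd_mulmx m A A' B B' :
  mxdvd m (A - A') -> mxdvd m (B - B') -> mxdvd m (A *m B - A' *m B').
Proof.
move=> hA hB; have -> : A *m B - A' *m B' = (A - A') *m B + A' *m (B - B').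
  by rewrite mulmxBl mulmxBr addrA subrK.
by apply: mxdvdD; [apply: mxdvdMr | apply: mxdvdMl].
Qed.

(* The determinant is a polynomial in the entries, hence respects congruences. *)
Lemma det_mxdvd m A B : mxdvd m (A - B) -> pdvd pi m (\det A - \det B).
Proof.
pose K x y := pdvd pi m (x - y).
have K_refl x : K x x by rewrite /K subrr; apply: pdvd0.
have KD x y x' y' : K x x' -> K y y' -> K (x + y) (x' + y').
  by move=> h1 h2; rewrite /K (_ : _ - _ = (x - x') + (y - y')); [apply: pdvdD | ring].
have KM x y x' y' : K x x' -> K y y' -> K (x * y) (x' * y').
  move=> h1 h2; rewrite /K (_ : _ - _ = (x - x') * y + x' * (y - y')); last by ring.
  by apply: pdvdD; [apply: pdvdMr | apply: pdvdMl].
move=> hAB; apply: (big_ind2 K) => [|x x' y y'|s _]; [exact: K_refl|exact: KD|].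
apply: (KM); first exact: K_refl.
apply: (big_ind2 K) => [|x x' y y'|i _]; [exact: K_refl|exact: KM|].
by have := hAB i (perm.fun_of_perm s i); rewrite !mxE.
Qed.

End PowerIdeal.

Section ElementaryMatrices.
Variables (R : comNzRingType) (n : nat).

(* A transvection 1 + c E_ij (i <> j) is triangular with unit diagonal. *)
Lemma det_transvection (i j : 'I_n) (c : R) :
  i != j -> \det (1%:M + c *: delta_mx i j) = 1.
Proof.
wlog lt_ji : i j c / (j < i)%N.
  move=> wlog_lt ne_ij; case: (ltngtP i j) => [lt_ij|lt_ji|/val_inj eq_ij].
  - rewrite -det_tr linearD /= trmx1 linearZ /= trmx_delta.
    by apply: wlog_lt; rewrite // eq_sym.
  - exact: wlog_lt.
  - by rewrite eq_ij eqxx in ne_ij.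
move=> ne_ij; rewrite det_trig; last first.
  apply/is_trig_mxP => k l lt_kl; rewrite !mxE -val_eqE /= ltn_eqF //.
  case: (k =P i) => [eki|] /=; last by rewrite mulr0 addr0.
  case: (l =P j) => [elj|] /=; last by rewrite mulr0 addr0.
  by move: lt_ji; rewrite -eki -elj ltnNge (ltnW lt_kl).
rewrite big1 // => k _; rewrite !mxE eqxx.
by case: (k =P i) => [->|] /=; rewrite ?(negbTE ne_ij) /= ?mulr0 ?addr0.
Qed.

Lemma det_dilation (l : 'I_n) (s : R) : \det (1%:M + s *: delta_mx l l) = 1 + s.
Proof.
rewrite det_trig; last first.
  apply/is_trig_mxP => k m lt_km; rewrite !mxE -val_eqE /= ltn_eqF //.
  case: (k =P l) => [ekl|] /=; last by rewrite mulr0 addr0.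
  case: (m =P l) => [eml|] /=; last by rewrite mulr0 addr0.
  by rewrite ekl eml ltnn in lt_km.
rewrite (bigD1 l) //= big1 ?mulr1 => [|k ne_kl]; first by rewrite !mxE !eqxx mulr1.
by rewrite !mxE eqxx (negbTE ne_kl) mulr0 addr0.
Qed.

End ElementaryMatrices.

Section FirstOrderCalculus.
Variables (R : comUnitRingType) (pi : R) (n : nat).
Implicit Types A B g U V : 'M[R]_n.

Lemma SL_unitmx A : SLmx A -> A \in unitmx.
Proof. by rewrite /SLmx unitmxE => /eqP ->; apply: unitr1. Qed.

Lemma SL_mul A B : SLmx A -> SLmx B -> SLmx (A *m B).
Proof. by rewrite /SLmx det_mulmx => /eqP -> /eqP ->; rewrite mulr1. Qed.

Lemma SL_inv A : SLmx A -> SLmx (invmx A).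
Proof. by rewrite /SLmx det_inv => /eqP ->; rewrite invr1. Qed.

Lemma invmx_right A B : A *m B = 1%:M -> invmx A = B.
Proof.
by move=> AB; have [uA _] := mulmx1_unit AB; rewrite -[invmx A]mulmx1 -AB mulKmx.
Qed.

Lemma mxdvd_invmx m A B : A \in unitmx -> B \in unitmx ->
  mxdvd pi m (A - B) -> mxdvd pi m (invmx A - invmx B).
Proof.
move=> uA uB hAB; have -> : invmx A - invmx B = invmx A *m (B - A) *m invmx B.
  by rewrite mulmxBr mulmxBl mulVmx // mul1mx mulmxK.
by apply: mxdvdMr; apply: mxdvdMl; apply: mxdvd_sym.
Qed.

(* [near1 M U A] says A = 1 + pi^M U mod pi^(M+1): for M > 0 this is the
   first-order behaviour of A near the identity, on which products, inverses
   and conjugates act linearly in U. *)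
Definition near1 M U A : Prop := mxdvd pi M.+1 (A - (1%:M + pi ^+ M *: U)).

Lemma near1_exact M U : near1 M U (1%:M + pi ^+ M *: U).
Proof. exact: mxdvd_refl. Qed.

Lemma near1_congr M U V A : mxdvd pi 1 (V - U) -> near1 M U A -> near1 M V A.
Proof.
move=> hUV hA; rewrite /near1; have -> : A - (1%:M + pi ^+ M *: V) =
    (A - (1%:M + pi ^+ M *: U)) - pi ^+ M *: (V - U).
  by apply/matrixP => i j; rewrite !mxE; ring.
by apply: mxdvdB hA _; rewrite -addn1; apply: mxdvd_scale.
Qed.

Lemma mxdvd_second_order M U V :
  (0 < M)%N -> mxdvd pi M.+1 ((pi ^+ M *: U) *m (pi ^+ M *: V)).
Proof.
move=> M_gt0; apply: (@mxdvdW _ _ _ (M + M)); first by rewrite -addn1 leq_add2l.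
by apply: mxdvdMM; apply: mxdvd_pow.
Qed.

Lemma near1_mul M U V A B :
  (0 < M)%N -> near1 M U A -> near1 M V B -> near1 M (U + V) (A *m B).
Proof.
move=> M_gt0 hA hB; rewrite /near1.
have hAB := mxdvd_mulmx hA hB.
have -> : A *m B - (1%:M + pi ^+ M *: (U + V)) = (A *m B -
    (1%:M + pi ^+ M *: U) *m (1%:M + pi ^+ M *: V)) + (pi ^+ M *: U) *m (pi ^+ M *: V).
  rewrite mulmxDl !mulmxDr !mul1mx !mulmx1 scalerDr.
  set P := (pi ^+ M *: U) *m _; clearbody P.
  by apply/matrixP => i j; rewrite !mxE; ring.
exact: mxdvdD hAB (mxdvd_second_order _ _ M_gt0).
Qed.

Lemma near1_inv M U A :
  (0 < M)%N -> A \in unitmx -> near1 M U A -> near1 M (- U) (invmx A).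
Proof.
move=> M_gt0 uA hA; rewrite /near1; set C := 1%:M + pi ^+ M *: - U.
have hAC : mxdvd pi M.+1 (A *m C - 1%:M).
  by have := near1_mul M_gt0 hA (near1_exact M (- U)); rewrite /near1 addrN scaler0 addr0.
have -> : invmx A - C = - (invmx A *m (A *m C - 1%:M)).
  by rewrite mulmxBr mulmx1 mulKmx // opprB.
by apply: mxdvdN; apply: mxdvdMl.
Qed.

Lemma near1_conj M U A g : g \in unitmx ->
  near1 M U A -> near1 M (g *m U *m invmx g) (g *m A *m invmx g).
Proof.
move=> ug hA; rewrite /near1.
have <- : g *m (1%:M + pi ^+ M *: U) *m invmx g = 1%:M + pi ^+ M *: (g *m U *m invmx g).
  by rewrite mulmxDr mulmx1 mulmxDl mulmxV // -scalemxAr -scalemxAl.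
by rewrite -mulmxBl -mulmxBr; apply: mxdvdMr; apply: mxdvdMl.
Qed.

End FirstOrderCalculus.

(* H meets every coset of the congruence subgroup of level pi^M. *)
Definition dense_mod (R : comUnitRingType) (pi : R) n (H : 'M[R]_n -> Prop) M : Prop :=
  forall A, SLmx A -> exists B, H B /\ mxdvd pi M (B - A).

Section LiftingSet.
Variables (R : comUnitRingType) (pi : R) (n : nat) (H : 'M[R]_n -> Prop).
Hypothesis hH : normal_subgroup_SL H.
Variables (M : nat) (mu : R).
Hypothesis M_gt0 : (0 < M)%N.
Hypotheses (mu_unit : mu \is a GRing.unit) (mu2_unit : mu ^+ 2 - 1 \is a GRing.unit).
Implicit Types Y : 'M[R]_n.

(* The matrices Y such that 1 + pi^M Y is approximated mod pi^(M+1) by H: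
   the level-M layer of the Lie algebra of H, viewed mod pi. *)
Definition lifts Y : Prop := exists2 h, H h & near1 pi M Y h.

Lemma lifts0 : lifts 0.
Proof.
case: hH => _ H1 _ _ _; exists 1%:M => //.
by have := near1_exact pi M (0 : 'M[R]_n); rewrite scaler0 addr0.
Qed.

Lemma liftsD Y1 Y2 : lifts Y1 -> lifts Y2 -> lifts (Y1 + Y2).
Proof.
case: hH => _ _ Hmul _ _ [h1 H1 e1] [h2 H2 e2].
by exists (h1 *m h2); [apply: Hmul | apply: near1_mul].
Qed.

Lemma lifts_sum (I : Type) (r : seq I) (P : pred I) (F : I -> 'M[R]_n) :
  (forall i, P i -> lifts (F i)) -> lifts (\sum_(i <- r | P i) F i).
Proof. by move=> hF; apply: big_ind => //; [apply: lifts0 | apply: liftsD]. Qed.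

Hypothesis dense_M : dense_mod pi H M.

(* Key commutator step: if B in H approximates g mod pi^M, then the commutator
   of B with u = 1 + pi^M Y lies in H and equals 1 + pi^M (gYg^-1 - Y) mod pi^(M+1). *)
Lemma lifts_commutator g Y : SLmx g -> SLmx (1%:M + pi ^+ M *: Y) ->
  lifts (g *m Y *m invmx g - Y).
Proof.
case: hH => HSL _ Hmul Hinv Hconj SLg SLu; set u := 1%:M + _ in SLu.
have [B [HB eBg]] := dense_M SLg; have uB := SL_unitmx (HSL _ HB).
exists (B *m (u *m invmx B *m invmx u)); first by apply: Hmul; last apply: Hconj; last apply: Hinv.
rewrite !mulmxA; apply: near1_mul => //; last exact: near1_inv (SL_unitmx SLu) (near1_exact _ _ _).
apply: near1_congr (near1_conj uB (near1_exact pi M Y)).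
apply: mxdvdW M_gt0 _; apply: mxdvd_mulmx; last first.
  exact: mxdvd_invmx (SL_unitmx SLg) uB (mxdvd_sym eBg).
by apply: mxdvd_mulmx (mxdvd_sym eBg) _; apply: mxdvd_refl.
Qed.

(* Conjugating c' E_ij by diag(.., mu, .., mu^-1, ..) multiplies it by mu^2, so the
   commutator step yields (mu^2 - 1) c' E_ij, i.e. any multiple of E_ij. *)
Lemma lifts_offdiag (i j : 'I_n) (c : R) : i != j -> lifts (c *: delta_mx i j).
Proof.
move=> ne_ij; have ne_ji : (j == i) = false by rewrite eq_sym (negbTE ne_ij).
pose d (x : R) := \row_(k < n) (if k == i then x else if k == j then x^-1 else 1).
have d_inv : diag_mx (d mu) *m diag_mx (d mu^-1) = 1%:M.
  apply/matrixP => k l; rewrite mul_diag_mx !mxE.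
  case: (k == l); rewrite ?mulr0n ?mulr0 // mulr1n.
  by case: (k == i); [rewrite mulrV | case: (k == j); rewrite ?invrK ?mulVr ?mulr1].
have SLd : SLmx (diag_mx (d mu)).
  rewrite /SLmx det_diag (bigD1 i) // (bigD1 j) /=; last by rewrite ne_ji.
  rewrite big1 => [|k /andP [ne_ki ne_kj]]; last by rewrite mxE (negbTE ne_ki) (negbTE ne_kj).
  by rewrite !mxE eqxx ne_ji eqxx mulr1 mulrV.
pose c' := c / (mu ^+ 2 - 1).
have SLu : SLmx (1%:M + pi ^+ M *: (c' *: delta_mx i j)).
  by rewrite /SLmx scalerA det_transvection.
have := lifts_commutator SLd SLu; rewrite (invmx_right d_inv).
congr lifts; apply/matrixP => k l; rewrite mul_mx_diag mul_diag_mx !mxE.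
have [eki|ne_ki] := eqVneq k i; last by rewrite andFb !mulr0 mul0r subr0.
have [elj|ne_lj] := eqVneq l j; last by rewrite andbF !mulr0 mul0r subr0.
subst k l; rewrite ne_ji invrK /= !mulr1.
have -> : mu * c' * mu - c' = c' * (mu ^+ 2 - 1) by ring.
by rewrite divrK.
Qed.

(* Conjugating c E_ji by the transvection 1 + E_ij produces c (E_ii - E_jj)
   up to a multiple of E_ij, which is already known to lift. *)
Lemma lifts_diag (i j : 'I_n) (c : R) : i != j -> lifts (c *: (delta_mx i i - delta_mx j j)).
Proof.
move=> ne_ij; have ne_ji : j != i by rewrite eq_sym.
pose g : 'M[R]_n := 1%:M + delta_mx i j.
have g_inv : g *m (1%:M - delta_mx i j) = 1%:M.
  by rewrite mulmxDl mul1mx mulmxBr mulmx1 mul_delta_mx_0 // subr0 subrK.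
have SLg : SLmx g by rewrite /SLmx /g -[delta_mx i j]scale1r det_transvection.
have SLu : SLmx (1%:M + pi ^+ M *: (c *: delta_mx j i)).
  by rewrite /SLmx scalerA det_transvection.
have -> : c *: (delta_mx i i - delta_mx j j) =
    (g *m (c *: delta_mx j i) *m invmx g - c *: delta_mx j i) + c *: delta_mx i j.
  rewrite (invmx_right g_inv) /g mulmxDl mul1mx -scalemxAr mul_delta_mx mulmxBr mulmx1.
  rewrite mulmxDl -!scalemxAl !mul_delta_mx.
  by apply/matrixP => k l; rewrite !mxE; ring.
by apply: liftsD; [apply: lifts_commutator | apply: lifts_offdiag].
Qed.

(* Every Y lifts after its trace is moved onto the entry (l, l): the matrix
   Y - tr(Y) E_ll is a combination of off-diagonal E_ij and of E_ii - E_ll. *)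
Lemma lifts_trace_corrected (l : 'I_n) Y : lifts (Y - \tr Y *: delta_mx l l).
Proof.
pose T i j := if i == j then Y i i *: (delta_mx i i - delta_mx l l) else Y i j *: delta_mx i j.
have -> : Y - \tr Y *: delta_mx l l = \sum_i \sum_j T i j.
  have eT i j : T i j = Y i j *: delta_mx i j - (i == j)%:R * Y i i *: delta_mx l l.
    by rewrite /T; case: eqVneq => [->|_]; rewrite ?scalerBr ?mul1r ?mul0r ?scale0r ?subr0.
  under eq_bigr => i _ do under eq_bigr => j _ do rewrite eT.
  under eq_bigr => i _ do rewrite sumrB.
  rewrite sumrB -matrix_sum_delta /mxtrace scaler_suml; congr (_ - _).
  apply: eq_bigr => i _; rewrite -scaler_suml (bigD1 i) //= eqxx mul1r big1 ?addr0 // => j ne_ji.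
  by rewrite eq_sym (negbTE ne_ji) mul0r.
apply: lifts_sum => i _; apply: lifts_sum => j _; rewrite /T.
have [eq_ij|ne_ij] := eqVneq i j; last exact: lifts_offdiag.
subst j; have [eq_il|ne_il] := eqVneq i l; last exact: lifts_diag.
by subst i; rewrite subrr scaler0; apply: lifts0.
Qed.

Hypothesis reg_pi : GRing.lreg pi.
Variable l : 'I_n.

(* An X in SL_n congruent to 1 mod pi^M is approximated by H mod pi^(M+1):
   writing X = 1 + pi^M Y, the determinant condition forces pi | tr Y, so Y is
   congruent mod pi to the lifting matrix Y - tr(Y) E_ll. *)
Lemma lifts_congruence_subgroup X :
  SLmx X -> mxdvd pi M (X - 1%:M) -> exists2 h, H h & mxdvd pi M.+1 (h - X).
Proof.
move=> SLX /mxdvd_factor [Y eY]; have eX : X = 1%:M + pi ^+ M *: Y by rewrite -eY addrC subrK.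
set t := \tr Y; have [h Hh eh] := lifts_trace_corrected l Y.
have SLh : SLmx h by case: hH => HSL _ _ _ _; apply: HSL.
have eW : near1 pi M (t *: delta_mx l l) (invmx h *m X).
  have := near1_mul M_gt0 (near1_inv M_gt0 (SL_unitmx SLh) eh) (near1_exact pi M Y).
  by rewrite -eX opprB subrK.
have t_pi : pdvd pi 1 t.
  have := det_mxdvd eW; rewrite det_mulmx det_inv (eqP SLh) (eqP SLX) invr1 mul1r.
  rewrite scalerA det_dilation opprD addNKr => /pdvdN; rewrite opprK -addn1.
  exact: pdvd_cancel.
exists h => //; rewrite eX; apply: near1_congr eh.
by rewrite opprB addrC subrK; move=> i j; rewrite mxE; apply: pdvdMr t_pi.
Qed.

Lemma dense_mod_succ : dense_mod pi H M.+1.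
Proof.
move=> A SLA; have [B [HB eBA]] := dense_M SLA.
have SLB : SLmx B by case: hH => HSL _ _ _ _; apply: HSL.
have SLX : SLmx (invmx B *m A) by apply: SL_mul (SL_inv SLB) SLA.
have [h Hh ehX] : exists2 h, H h & mxdvd pi M.+1 (h - invmx B *m A).
  apply: lifts_congruence_subgroup SLX _.
  by rewrite -(mulVmx (SL_unitmx SLB)) -mulmxBr; apply: mxdvdMl; apply: mxdvd_sym.
exists (B *m h); split; first by case: hH => _ _ Hmul _ _; apply: Hmul.
by rewrite -[A](mulKVmx (SL_unitmx SLB)) -mulmxBr; apply: mxdvdMl.
Qed.

End LiftingSet.

(* Density mod pi lifts to density mod every power of pi, provided some unit mu
   has mu^2 - 1 a unit (needed for the diagonal conjugations). *)
Lemma dense_mod_all (R : comUnitRingType) (pi : R) n (H : 'M[R]_n -> Prop) (mu : R) :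
  normal_subgroup_SL H -> GRing.lreg pi -> (0 < n)%N ->
  mu \is a GRing.unit -> mu ^+ 2 - 1 \is a GRing.unit ->
  dense_mod pi H 1 -> forall M, dense_mod pi H M.+1.
Proof.
move=> hH reg_pi n_gt0 mu_unit mu2_unit dense1.
elim=> [//|M IH]; exact: (dense_mod_succ hH (ltn0Sn M) mu_unit mu2_unit IH reg_pi (Ordinal n_gt0)).
Qed.

Lemma closed_dense_full (R : comUnitRingType) (pi : R) n (H : 'M[R]_n -> Prop) :
  SL_closed pi H -> (forall M, dense_mod pi H M.+1) -> forall A, SLmx A -> H A.
Proof.
move=> hHcl dense A SLA; apply: hHcl => // m.
have [B [HB eBA]] := dense m A SLA; exists B; split => // i j.
by have := mxdvdW (leqnSn m) eBA i j; rewrite !mxE.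
Qed.

Lemma residue_unit (R : idomainType) (pi : R) (k : nzRingType) (red : {rmorphism R -> k}) :
  DVR_uniformizer pi -> (forall x, pdvd pi 1 x -> red x = 0) ->
  forall x, red x != 0 -> x \is a GRing.unit.
Proof.
case=> _ _ hfac red_ker x red_x; have x_neq0 : x != 0 by apply: contraNneq red_x => ->; rewrite rmorph0.
have [[|m] [u [u_unit x_eq]]] := hfac x x_neq0; first by rewrite x_eq mulr1.
case/negP: red_x; apply/eqP/red_ker.
by exists (u * pi ^+ m); rewrite x_eq exprS; ring.
Qed.

Lemma exists_nonzero_sqr_neq1 (k : finFieldType) :
  (3 < #|k|)%N -> exists x : k, (x != 0) && (x ^+ 2 != 1).
Proof.
move=> k_gt3; apply/existsP; apply: contraLR k_gt3 => /existsPn no_x; rewrite -leqNgt.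
apply: (leq_trans _ (card_size [:: 0; 1; -1])); apply/subset_leq_card/subsetP => x _.
by move: (no_x x); rewrite negb_and !negbK sqrf_eq1 !inE => /orP [|/orP []] ->; rewrite ?orbT.
Qed.

Lemma dense_mod1_of_residue (R : comUnitRingType) (pi : R) n (H : 'M[R]_n -> Prop)
    (k : comNzRingType) (red : {rmorphism R -> k}) :
  (forall x, red x = 0 -> pdvd pi 1 x) ->
  (forall B : 'M[k]_n, \det B = 1 -> exists A, H A /\ map_mx red A = B) ->
  dense_mod pi H 1.
Proof.
move=> red_ker hsurj A SLA.
have det_redA : \det (map_mx red A) = 1 by rewrite det_map_mx (eqP SLA) rmorph1.
have [B [HB eB]] := hsurj _ det_redA.
exists B; split => // i j; apply: red_ker.
have := congr1 (fun C : 'M[k]_n => C i j) eB; rewrite !mxE rmorphB => ->; exact: subrr.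
Qed.

Theorem mainTheorem15
  (R : idomainType) (pi : R)
  (hdvr : DVR_uniformizer pi) (hcomp : padic_complete pi)
  (k : finFieldType) (red : {rmorphism R -> k})
  (hred_surj : forall y : k, exists x : R, red x = y)
  (hred_ker : forall x : R, red x = 0 <-> pdvd pi 1 x)
  (heqchar : [pchar R] =i [pchar k])
  (hk : (9 < #|k|)%N)
  (n : nat) (hn : (2 <= n)%N)
  (H : 'M[R]_n -> Prop)
  (hH : normal_subgroup_SL H) (hHcl : SL_closed pi H)
  (hsurj : forall B : 'M[k]_n, \det B = 1 ->
             exists A : 'M[R]_n, H A /\ map_mx red A = B) :
  forall A : 'M[R]_n, SLmx A -> H A.
Proof.
have unit_of_red := residue_unit hdvr (fun x => proj2 (hred_ker x)).
have [x /andP [x_neq0 x2_neq1]] := exists_nonzero_sqr_neq1 (leq_trans (isT : (3 < 10)%N) hk).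
have [mu red_mu] := hred_surj x.
have mu_unit : mu \is a GRing.unit by apply: unit_of_red; rewrite red_mu.
have mu2_unit : mu ^+ 2 - 1 \is a GRing.unit.
  by apply: unit_of_red; rewrite rmorphB rmorphXn rmorph1 red_mu subr_eq0.
have reg_pi : GRing.lreg pi by case: hdvr => pi_neq0 _ _; apply: mulfI.
apply: closed_dense_full hHcl _ => M.
apply: dense_mod_all hH reg_pi (ltnW hn) mu_unit mu2_unit _ M.
exact: dense_mod1_of_residue (fun x => proj1 (hred_ker x)) hsurj.
Qed.
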